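(* For every $n\ge1$ there is a bijection $\sigma\mapsto\sigma'$ from $\mathcal{W}^*_{2n+1}$ onto $\mathcal{X}_{2n}$ such that $\mathrm{des}(\sigma')=\mathrm{des}(\sigma)$. In particular $\sum_{\sigma\in\mathcal{W}^*_{2n+1}}t^{\mathrm{des}(\sigma)}=\sum_{\sigma\in\mathcal{X}_{2n}}t^{\mathrm{des}(\sigma)}$.
   Context: For $\sigma\in\mathfrak{S}_m$ (permutations of $[m]$), a descent is an index $i$ with $\sigma_i>\sigma_{i+1}$, with descent pair $(\sigma_i,\sigma_{i+1})$; $\mathrm{des}(\sigma)$ is the number of descents. $\mathcal{X}_{2n}$ is the set of permutations of $[2n]$ whose every descent pair has even first entry and odd second entry. $\mathcal{W}^*_{2n+1}$ is the set of permutations of $[2n+1]$ whose every descent pair consists of two odd entries and whose last entry is odd. *)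

From mathcomp Require Import all_boot all_order all_algebra all_fingroup.
Set Implicit Arguments. Unset Strict Implicit. Unset Printing Implicit Defensive.

(* A permutation of [m] = {1..m} is represented by s : 'S_m (a permutation of
   'I_m = {0..m-1}); its one-line notation is sigma_1 ... sigma_m with
   sigma_(i+1) = (s i) + 1 (values shifted to {1..m}). *)
Definition oneline m (s : 'S_m) : seq nat := [seq (s i).+1 | i <- enum 'I_m].

Definition descent_pairs (w : seq nat) : seq (nat * nat) :=
  [seq p <- zip w (behead w) | p.2 < p.1].

Definition des m (s : 'S_m) : nat := size (descent_pairs (oneline s)).

Definition inX m (s : 'S_m) : bool :=
  all (fun p => ~~ odd p.1 && odd p.2) (descent_pairs (oneline s)).

Definition inWstar m (s : 'S_m) : bool :=
  all (fun p => odd p.1 && odd p.2) (descent_pairs (oneline s))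
  && odd (last 0 (oneline s)).

From mathcomp Require Import all_boot all_order all_algebra all_fingroup zify.
Set Implicit Arguments. Unset Strict Implicit. Unset Printing Implicit Defensive.

(* For a word w let
   wdes w be its number of descents and wodd w the number of descents whose
   bottom letter is odd; call w (b,s)-topped when every descent top has parity
   b (odd = b) and, if s holds, so has its last letter.  Then W* consists of
   the (true,true)-topped permutations with wodd = wdes, and X of the
   (false,false)-topped ones with wodd = wdes.

   We study the multiset stats b s m of the pairs (wdes, wodd) over the
   (b,s)-topped permutations of [m].  Each permutation of [k+1] arises exactly
   once by inserting the letter 1 into the shift t+1 of a permutation t of
   [k] (permutations_insert1); shifting flips all parities and maps
   (wdes, wodd) to (wdes, wdes - wodd), and inserting 1 changes the pair in a
   way counted explicitly by insert1_stats.  This yields a recursion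
   (stats_rec) from stats (~~ b) s k to stats b s (k+1) whose only parameter
   is the number of letters of parity b among 2..k+1.  Comparing parameters,
   an induction on n shows stats true true (2n+1) = stats false false (2n) as
   multisets (stats_equidistributed).  Reading off the pairs (d, d), des has
   fibres of equal sizes on W* and X (card_des_fiber), so a des-preserving
   bijection exists (fiber_bijection) and transports the sums (big_bijection). *)

Definition wdes (w : seq nat) : nat := size (descent_pairs w).
Definition wodd (w : seq nat) : nat :=
  count (fun p : nat * nat => odd p.2) (descent_pairs w).
Definition wstat (w : seq nat) : nat * nat := (wdes w, wodd w).
Definition topped (b s : bool) (w : seq nat) : bool :=
  all (fun p : nat * nat => odd p.1 == b) (descent_pairs w)
  && (s ==> (nilp w || (odd (last 0 w) == b))).
Definition npar (b : bool) (v : seq nat) : nat := count (fun x => odd x == b) v.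

Lemma descent_pairs_cons2 x y u : descent_pairs [:: x, y & u] =
  (if y < x then [:: (x, y)] else [::]) ++ descent_pairs (y :: u).
Proof. by rewrite /descent_pairs /=; case: ifP. Qed.

Lemma wdes_cons2 x y u : wdes [:: x, y & u] = (y < x) + wdes (y :: u).
Proof. by rewrite /wdes descent_pairs_cons2 size_cat; case: ifP. Qed.

Lemma wodd_cons2 x y u : wodd [:: x, y & u] = ((y < x) && odd y) + wodd (y :: u).
Proof. by rewrite /wodd descent_pairs_cons2 count_cat; case: ifP; rewrite /= ?addn0. Qed.

Lemma topped_cons2 b s x y u :
  topped b s [:: x, y & u] = ((y < x) ==> (odd x == b)) && topped b s (y :: u).
Proof.
by rewrite /topped descent_pairs_cons2 all_cat; case: ifP; rewrite //= andbT andbA.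
Qed.

Lemma topped1 b s x : topped b s [:: x] = (s ==> (odd x == b)).
Proof. by []. Qed.

Lemma wodd_le_wdes w : wodd w <= wdes w.
Proof. exact: count_size. Qed.

(* Descent tops of a topped word have parity b and are pairwise distinct
   positions; if s && ~~ b the last letter also has parity b and is no top. *)
Lemma wdes_le_npar b s x w :
  topped b s (x :: w) -> wdes (x :: w) + (s && ~~ b) <= npar b (x :: w).
Proof.
elim: w x => [|y u IH] x.
  by rewrite topped1 /wdes /npar /=; case: s; case: b; case: (odd x).
rewrite topped_cons2 => /andP[top_xy /IH {}IH].
rewrite wdes_cons2; move: top_xy IH; rewrite /npar /=.
by case: (y < x) => /= [/eqP->|_]; rewrite ?eqxx /=; lia.
Qed.

Fixpoint insert1 (v : seq nat) : seq (seq nat) :=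
  if v is x :: v' then (1 :: v) :: map (cons x) (insert1 v') else [:: [:: 1]].

(* The multiset made of k1 copies of z = (d, o), k2 copies of (d, o+1) and
   k3 copies of (d+1, o+1): the possible effects of inserting 1. *)
Definition spread (k1 k2 k3 : nat) (z : nat * nat) : seq (nat * nat) :=
  nseq k1 z ++ nseq k2 (z.1, z.2.+1) ++ nseq k3 (z.1.+1, z.2.+1).

Lemma spread_consB k1 k2 k3 z :
  perm_eq ((z.1, z.2.+1) :: spread k1 k2 k3 z) (spread k1 k2.+1 k3 z).
Proof. by rewrite /spread -[_ :: _]/([:: _] ++ _) perm_catCA. Qed.

Lemma spread_consC k1 k2 k3 z :
  perm_eq ((z.1.+1, z.2.+1) :: spread k1 k2 k3 z) (spread k1 k2 k3.+1 z).
Proof.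
rewrite /spread -[_ :: _]/([:: _] ++ _) perm_catCA perm_cat2l.
by rewrite perm_catCA.
Qed.

Lemma map_spread i j k1 k2 k3 z :
  [seq (p.1 + i, p.2 + j) | p <- spread k1 k2 k3 z] =
  spread k1 k2 k3 (z.1 + i, z.2 + j).
Proof. by rewrite /spread !map_cat !map_nseq. Qed.

Lemma stats_cons2 b s x y (L : seq (seq nat)) :
  [seq wstat w | w <- [seq x :: y :: w | w <- L] & topped b s w] =
  if (y < x) ==> (odd x == b) then
    [seq (p.1 + (y < x), p.2 + ((y < x) && odd y))
    | p <- [seq wstat w | w <- [seq y :: w | w <- L] & topped b s w]]
  else [::].
Proof.
rewrite !filter_map -!map_comp; case: ifP => c_xy; last first.
  by rewrite (eq_filter (a2 := pred0)) ?filter_pred0 // => w; rewrite /= topped_cons2 c_xy.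
rewrite (eq_filter (a2 := preim (cons y) (topped b s))); last first.
  by move=> w; rewrite /= topped_cons2 c_xy.
apply: eq_map => w /=.
by rewrite /wstat wdes_cons2 wodd_cons2 addnC [_ + wodd _]addnC.
Qed.

(* The effect of prepending a letter x to a word starting with y on the
   statistics of the insertions of 1: dxy tells whether (x, y) is a descent,
   px whether x has parity b, oy whether y is odd; inserting 1 right after x
   gives the pair (d+1, o+1) and is allowed when x has parity b. *)
Lemma spread_prepend (dxy px oy : bool) D O C e : O <= D -> D + e <= C ->
  perm_eq ((if px then [:: (D.+1, O.+1)] else [::]) ++
           (if dxy ==> px
            then spread O (D - O) (C - D - e) (D + dxy, O + (dxy && oy))
            else [::]))
          (if dxy ==> px
           then spread ((dxy && oy) + O) (dxy + D - ((dxy && oy) + O))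
                       (px + C - (dxy + D) - e) (dxy + D, (dxy && oy) + O)
           else [::]).
Proof.
move=> O_le_D De_le_C.
case: dxy; case: px; case: oy => //=; rewrite ?add0n ?add1n ?addn0 ?addn1 ?subSS //.
- by rewrite (subSn O_le_D); apply: spread_consB.
all: have -> : C.+1 - D - e = (C - D - e).+1 by lia.
all: exact: spread_consC.
Qed.

(* Insertions of 1 after the first letter of a word v with letters >= 2:
   after a descent with odd (resp. even) bottom the pair is (d, o) (resp.
   (d, o+1)); after any other letter of parity b a new descent appears,
   except at the end of the word when s && ~~ b. *)
Lemma insert1_tail_stats b s x u : all (leq 2) (x :: u) ->
  perm_eq [seq wstat w | w <- [seq x :: w | w <- insert1 u] & topped b s w]
    (if topped b s (x :: u)
     then spread (wodd (x :: u)) (wdes (x :: u) - wodd (x :: u))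
                 (npar b (x :: u) - wdes (x :: u) - (s && ~~ b)) (wstat (x :: u))
     else [::]).
Proof.
elim: u x => [|y u IH] x all_xu.
  have x_gt1 : 1 < x by case/andP: all_xu.
  rewrite /= topped_cons2 x_gt1 !topped1 /wstat /wdes /wodd /descent_pairs /=.
  by case: s; case: b; case: (odd x); rewrite /= ?x_gt1.
have /and3P[x_gt1 y_gt1 all_u] : [&& 1 < x, 1 < y & all (leq 2) u] := all_xu.
have y_lt1 : (y < 1) = false by case: y {all_xu} y_gt1.
have head_top : topped b s [:: x, 1, y & u] = (odd x == b) && topped b s (y :: u).
  by rewrite !topped_cons2 x_gt1 y_lt1.
have head_stat : wstat [:: x, 1, y & u] = ((wdes (y :: u)).+1, (wodd (y :: u)).+1).
  by rewrite /wstat !wdes_cons2 !wodd_cons2 x_gt1 y_lt1.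
rewrite [insert1 _]/= map_cons -cat1s filter_cat map_cat -map_comp stats_cons2.
have {}IH := IH y (introT andP (conj y_gt1 all_u)).
have -> : [seq wstat w | w <- [:: [:: x, 1, y & u]] & topped b s w] =
    if (odd x == b) && topped b s (y :: u)
    then [:: ((wdes (y :: u)).+1, (wodd (y :: u)).+1)] else [::].
  by rewrite -head_stat /= head_top; case: ifP.
have npar_xyu : npar b [:: x, y & u] = (odd x == b) + npar b (y :: u) by [].
rewrite topped_cons2 /wstat wdes_cons2 wodd_cons2 npar_xyu.
case top_yu: (topped b s (y :: u)) IH; last first.
  by move/perm_nilP->; rewrite !andbF; case: ifP.
rewrite !andbT /wstat => /(perm_map (fun p : nat * nat =>
  (p.1 + (y < x), p.2 + ((y < x) && odd y)))); rewrite map_spread => tail_perm.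
apply: (perm_trans _ (spread_prepend _ _ _ (wodd_le_wdes _) (wdes_le_npar top_yu))).
by rewrite perm_cat2l; case: ifP => // _; exact: tail_perm.
Qed.

(* All insertions of 1: the one in front creates no descent and contributes
   one more pair (d, o). *)
Lemma insert1_stats b s v : v != [::] -> all (leq 2) v ->
  perm_eq [seq wstat w | w <- insert1 v & topped b s w]
    (if topped b s v
     then spread (wodd v).+1 (wdes v - wodd v)
                 (npar b v - wdes v - (s && ~~ b)) (wstat v)
     else [::]).
Proof.
case: v => [//|x u] _ all_xu.
have x_lt1 : (x < 1) = false by case: x all_xu.
have front_top : topped b s [:: 1, x & u] = topped b s (x :: u).
  by rewrite topped_cons2 x_lt1.
have front_stat : wstat [:: 1, x & u] = wstat (x :: u).
  by rewrite /wstat wdes_cons2 wodd_cons2 x_lt1.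
have tail := insert1_tail_stats b s all_xu.
rewrite [insert1 _]/= -cat1s filter_cat map_cat [filter _ [:: _]]/= front_top.
case: ifP tail => top_xu tail; last by move/perm_nilP: tail => ->.
by rewrite map_cons front_stat cat1s perm_cons.
Qed.

(* Shifting all letters by one keeps the descents and flips all parities. *)
Lemma descent_pairs_shift w :
  descent_pairs (map succn w) = [seq (p.1.+1, p.2.+1) | p <- descent_pairs w].
Proof.
elim: w => [|x [|y u] IH] //.
rewrite [map _ _]/= descent_pairs_cons2 -[_.+1 :: map _ _]/(map succn (y :: u)).
by rewrite IH descent_pairs_cons2 ltnS map_cat; case: (y < x).
Qed.

Lemma wdes_shift w : wdes (map succn w) = wdes w.
Proof. by rewrite /wdes descent_pairs_shift size_map. Qed.

Lemma wodd_shift w : wodd (map succn w) = wdes w - wodd w.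
Proof.
rewrite /wodd /wdes descent_pairs_shift count_map.
by rewrite -(count_predC (fun p : nat * nat => odd p.2)) addKn.
Qed.

Lemma topped_shift b s w : topped b s (map succn w) = topped (~~ b) s w.
Proof.
rewrite /topped descent_pairs_shift all_map; congr andb.
  by apply: eq_all => p /=; case: b; case: (odd p.1).
case: w => [//|x w] /=; rewrite (last_map succn w x) /=.
by case: b; case: (odd (last x w)).
Qed.

Lemma insert1_perm v w : w \in insert1 v -> perm_eq w (1 :: v).
Proof.
elim: v w => [|x v IH] w /=; first by rewrite inE => /eqP->.
rewrite inE => /orP[/eqP-> //|/mapP[w' /IH w'_perm ->]].
rewrite -(perm_cons x) in w'_perm; apply: (perm_trans w'_perm).
by rewrite -[[:: x, 1 & v]]/([:: x] ++ [:: 1] ++ v) perm_catCA.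
Qed.

Lemma insert1_rem v w : 1 \notin v -> w \in insert1 v -> rem 1 w = v.
Proof.
elim: v w => [|x v IH] w /=; first by rewrite inE => _ /eqP->.
rewrite inE negb_or => /andP[x_neq1 v_no1].
rewrite inE => /orP[/eqP-> /=|/mapP[w' w'_in ->] /=]; first by [].
by rewrite eq_sym (negbTE x_neq1) IH.
Qed.

Lemma insert1_rem_mem w : 1 \in w -> w \in insert1 (rem 1 w).
Proof.
elim: w => [//|x w IH]; rewrite inE eq_sym.
case: (eqVneq x 1) => [->|x_neq1] /= w_1.
  by case: w {IH w_1} => [|y w]; rewrite /= inE eqxx.
by rewrite (negbTE x_neq1) /= inE map_f ?orbT // IH.
Qed.

Lemma insert1_uniq v : 1 \notin v -> uniq (insert1 v).
Proof.
elim: v => [//|x v IH] /=; rewrite inE negb_or => /andP[x_neq1 v_no1].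
rewrite map_inj_uniq ?IH // => [|w1 w2 []//]; rewrite andbT.
by apply/mapP => -[w _ [x1]]; rewrite x1 eqxx in x_neq1.
Qed.

Lemma iota_shift a k : map succn (iota a k) = iota a.+1 k.
Proof. by elim: k a => [//|k IH] a /=; rewrite IH. Qed.

Lemma permutations_insert1 k :
  perm_eq (permutations (iota 1 k.+1))
          [seq w | t <- permutations (iota 1 k), w <- insert1 (map succn t)].
Proof.
have no1 t : t \in permutations (iota 1 k) -> 1 \notin map succn t.
  rewrite mem_permutations => /perm_mem t_perm.
  by apply/mapP => -[x]; rewrite t_perm mem_iota; case: x.
apply: uniq_perm; first exact: permutations_uniq.
  apply: allpairs_uniq_dep => [|t /no1/insert1_uniq //|]; first exact: permutations_uniq.
  move=> _ _ /allpairsPdep[t1 [w1 [t1P w1P ->]]] /allpairsPdep[t2 [w2 [t2P w2P ->]]] /= w12.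
  move: w1P w2P; rewrite w12 => /(insert1_rem (no1 _ t1P)) e1 /(insert1_rem (no1 _ t2P)).
  by rewrite e1 => /(inj_map succn_inj) ->.
move=> w; rewrite mem_permutations; apply/idP/allpairsPdep => [w_perm | ].
  have w_1 : 1 \in w by rewrite (perm_mem w_perm) mem_iota.
  have rem_perm : perm_eq (rem 1 w) (iota 2 k).
    by rewrite -(perm_cons 1) -(permPl (perm_to_rem w_1)).
  have rem_gt0 : all (leq 1) (rem 1 w).
    by apply/allP => x; rewrite (perm_mem rem_perm) mem_iota => /andP[/ltnW].
  have succ_pred : map succn (map predn (rem 1 w)) = rem 1 w.
    by rewrite -map_comp map_id_in // => x /(allP rem_gt0) /prednK.
  exists (map predn (rem 1 w)), w; rewrite succ_pred insert1_rem_mem //.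
  rewrite mem_permutations; split=> //; apply: (perm_map_inj succn_inj).
  by rewrite succ_pred iota_shift.
move=> [t [w' [t_perm /insert1_perm w_perm ->]]]; apply: (perm_trans w_perm).
by rewrite [iota 1 _]/= perm_cons -iota_shift perm_map -?mem_permutations.
Qed.

Lemma map_filter_allpairs (S T U : Type) (P : pred T) (f : T -> U)
    (s : seq S) (t : S -> seq T) :
  [seq f y | y <- [seq y | x <- s, y <- t x] & P y]
  = [seq z | x <- s, z <- [seq f y | y <- t x & P y]].
Proof. by elim: s => //= x s IH; rewrite !map_id filter_cat map_cat IH. Qed.

Lemma allpairs_filterl (S T : Type) (P : pred S) (s : seq S) (t : S -> seq T) :
  [seq y | x <- [seq x <- s | P x], y <- t x]
  = [seq y | x <- s, y <- if P x then t x else [::]].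
Proof. by elim: s => //= x s IH; case: (P x); rewrite /= IH. Qed.

Definition stats (b s : bool) (m : nat) : seq (nat * nat) :=
  [seq wstat w | w <- permutations (iota 1 m) & topped b s w].

(* The statistics of the insertions of 1 into a shifted word of statistics z;
   c is the number of letters of the new parity, corrected for the end. *)
Definition offspring (c : nat) (z : nat * nat) : seq (nat * nat) :=
  spread (z.1 - z.2).+1 z.2 (c - z.1) (z.1, z.1 - z.2).

Lemma stats_rec b s k : 0 < k ->
  perm_eq (stats b s k.+1)
    [seq z | y <- stats (~~ b) s k, z <- offspring (npar b (iota 2 k) - (s && ~~ b)) y].
Proof.
move=> k_gt0; rewrite /stats.
rewrite (permPl (perm_map _ (perm_filter _ (permutations_insert1 k)))).
rewrite map_filter_allpairs allpairs_mapl allpairs_filterl.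
apply: perm_allpairs_dep => // t; rewrite mem_permutations => t_perm.
have v_nil : map succn t != [::].
  by rewrite -size_eq0 size_map (perm_size t_perm) size_iota -lt0n.
have v_gt1 : all (leq 2) (map succn t).
  by apply/allP => x /mapP[y]; rewrite (perm_mem t_perm) mem_iota => /andP[y_gt0 _] ->.
rewrite (permPl (insert1_stats b s v_nil v_gt1)) topped_shift.
case: ifP => // _; rewrite /wstat wdes_shift wodd_shift /offspring /=.
have -> : npar b (map succn t) = npar b (iota 2 k).
  by rewrite /npar (seq.permP (perm_map succn t_perm)) iota_shift.
by rewrite subKn ?wodd_le_wdes // subnAC.
Qed.

Lemma npar_iota_even b a n : npar b (iota a n.*2) = n.
Proof.
elim: n a => [//|n IH] a.
rewrite doubleS /npar /= -/(npar b _) IH.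
by clear IH; case: (odd a); case: b.
Qed.

Lemma npar_iota2_odd b n : npar b (iota 2 n.*2.+1) = n + ~~ b.
Proof.
rewrite -[n.*2.+1]addn1 iotaD /npar count_cat -/(npar b _) npar_iota_even /=.
by rewrite odd_double; case: b.
Qed.

(* Both parity patterns are followed simultaneously: each step of the
   recursion uses the other pattern at the previous size, with equal
   parameters. *)
Lemma stats_equidistributed n :
  perm_eq (stats true true n.*2.+1) (stats false false n.*2)
  /\ perm_eq (stats false true n.*2.+2) (stats true false n.*2.+1).
Proof.
elim: n => [|n [_ IH]]; first by split; vm_compute.
have odd_size : perm_eq (stats true true n.+1.*2.+1) (stats false false n.+1.*2).
  rewrite doubleS (permPl (stats_rec _ _ _)) // (permPr (stats_rec _ _ _)) //.
  rewrite -[n.*2.+2]/(n.+1.*2) npar_iota_even npar_iota2_odd addn1.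
  exact: perm_allpairs_dep.
split=> //; rewrite doubleS (permPl (stats_rec _ _ _)) // (permPr (stats_rec _ _ _)) //.
rewrite -[n.*2.+2]/(n.+1.*2) npar_iota_even npar_iota2_odd addn1 subn1.
exact: perm_allpairs_dep.
Qed.

Lemma oneline_permP m (w : seq nat) :
  reflect (exists s : 'S_m, w = oneline s) (perm_eq w (iota 1 m)).
Proof.
have -> : iota 1 m = [tuple i.+1 | i < m] :> seq nat.
  by rewrite -iota_shift -val_enum_ord -map_comp.
apply: (iffP tuple_permP) => -[s ->]; exists s.
  by apply: eq_map => i; rewrite tnth_mktuple.
by apply: eq_map => i /=; rewrite tnth_mktuple.
Qed.

Lemma oneline_inj m : injective (@oneline m).
Proof.
move=> s1 s2 /eq_in_map s12; apply/permP => i.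
by have [/val_inj] := s12 i (mem_enum _ i).
Qed.

Lemma perm_oneline m :
  perm_eq [seq oneline s | s : 'S_m] (permutations (iota 1 m)).
Proof.
apply: uniq_perm; first by rewrite map_inj_uniq ?enum_uniq //; apply: oneline_inj.
  exact: permutations_uniq.
move=> w; rewrite mem_permutations.
by apply/mapP/oneline_permP => -[s]; exists s; rewrite ?mem_enum.
Qed.

Lemma card_oneline m (P : pred (seq nat)) :
  #|[pred s : 'S_m | P (oneline s)]| = count P (permutations (iota 1 m)).
Proof.
rewrite -(seq.permP (perm_oneline m)) count_map cardE /enum_mem size_filter.
by rewrite count_filter; apply: eq_count => s; rewrite !inE andbT.
Qed.

(* W* and X in terms of the statistics: all descent bottoms odd means
   wodd = wdes. *)
Lemma inWstarE m (s : 'S_m) : 0 < m ->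
  inWstar s = topped true true (oneline s) && (wodd (oneline s) == wdes (oneline s)).
Proof.
move=> m_gt0; have nonempty : nilp (oneline s) = false.
  by rewrite /nilp size_map size_enum_ord; case: m s m_gt0.
rewrite /inWstar /topped /wodd /wdes -all_count nonempty /= all_predI eqb_id andbAC.
by congr (_ && _ && _); apply: eq_all => p; rewrite eqb_id.
Qed.

Lemma inXE m (s : 'S_m) :
  inX s = topped false false (oneline s) && (wodd (oneline s) == wdes (oneline s)).
Proof.
rewrite /inX /topped /wodd /wdes -all_count andbT all_predI.
by congr andb; apply: eq_all => p /=; case: (odd p.1).
Qed.

Lemma card_des_fiber b s m (P : pred 'S_m) d :
  (forall t, P t = topped b s (oneline t) && (wodd (oneline t) == wdes (oneline t))) ->
  #|[pred t | P t && (des t == d)]| = count (pred1 (d, d)) (stats b s m).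
Proof.
move=> PE; rewrite (eq_card (B := [pred t : 'S_m |
    (fun w => topped b s w && (wstat w == (d, d))) (oneline t)])); last first.
  move=> t; rewrite !inE PE /des -/(wdes _) xpair_eqE -andbA; congr andb.
  by case: (eqVneq (wdes (oneline t)) d) => [->|d_neq];
    rewrite ?andbT ?andbF // (negbTE d_neq) andbF.
rewrite (card_oneline m (fun w => topped b s w && (wstat w == (d, d)))).
by rewrite /stats count_map count_filter; apply: eq_count => w; rewrite andbC.
Qed.

Section FiberBijection.

Variables (T1 T2 : finType) (P : pred T1) (Q : pred T2).
Variables (h1 : T1 -> nat) (h2 : T2 -> nat).

Lemma fiber_bijection (x2 : T2) :
  (forall d, #|[pred s | P s && (h1 s == d)]| = #|[pred t | Q t && (h2 t == d)]|) ->
  exists f : T1 -> T2,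
    [/\ {in P, forall s, Q (f s)}, {in P &, injective f},
        (forall t, Q t -> exists2 s, P s & f s = t) & {in P, forall s, h2 (f s) = h1 s}].
Proof.
move=> same_card.
pose L1 d := enum [pred s | P s && (h1 s == d)].
pose L2 d := enum [pred t | Q t && (h2 t == d)].
have size_L d : size (L1 d) = size (L2 d) by rewrite -!cardE same_card.
have L1P s : P s -> s \in L1 (h1 s) by move=> Ps; rewrite mem_enum inE Ps eqxx.
pose f s := nth x2 (L2 (h1 s)) (index s (L1 (h1 s))).
have fL2 s : P s -> Q (f s) && (h2 (f s) == h1 s).
  move=> Ps; have : f s \in L2 (h1 s) by rewrite mem_nth // -size_L index_mem L1P.
  by rewrite mem_enum.
exists f; split=> [s /fL2 /andP[] // | s1 s2 P1 P2 f12 | t Qt | s /fL2 /andP[_ /eqP] //].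
  have h12 : h1 s1 = h1 s2.
    by case/andP: (fL2 _ P1) => _ /eqP <-; case/andP: (fL2 _ P2) => _ /eqP <-; rewrite f12.
  move: f12; rewrite /f h12 => f12.
  have same_index : index s1 (L1 (h1 s2)) = index s2 (L1 (h1 s2)).
    apply/eqP; rewrite -(@nth_uniq _ x2 (L2 (h1 s2))) ?f12 ?enum_uniq //.
      by rewrite -size_L index_mem -h12 L1P.
    by rewrite -size_L index_mem L1P.
  by rewrite -(nth_index s1 (L1P _ P2)) -same_index nth_index // -h12 L1P.
have tL2 : t \in L2 (h2 t) by rewrite mem_enum inE Qt eqxx.
have i_lt : index t (L2 (h2 t)) < size (L1 (h2 t)) by rewrite size_L index_mem.
case L1E: (L1 (h2 t)) i_lt => [//|s0 l] i_lt.
pose s := nth s0 (L1 (h2 t)) (index t (L2 (h2 t))).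
have : s \in L1 (h2 t) by rewrite mem_nth // L1E.
rewrite mem_enum inE => /andP[Ps /eqP h1s]; exists s => //.
by rewrite /f h1s index_uniq ?enum_uniq ?L1E // nth_index.
Qed.

Lemma big_bijection (R : Type) (idx : R) (op : Monoid.com_law idx) (F : nat -> R)
    (f : T1 -> T2) :
  {in P, forall s, Q (f s)} -> {in P &, injective f} ->
  (forall t, Q t -> exists2 s, P s & f s = t) -> {in P, forall s, h2 (f s) = h1 s} ->
  \big[op/idx]_(s | P s) F (h1 s) = \big[op/idx]_(t | Q t) F (h2 t).
Proof.
move=> fQ f_inj f_onto f_h.
have [s0 _ | P0] := pickP P; last first.
  rewrite !big_pred0 // => t; apply/negbTE/negP => /f_onto[s].
  by rewrite P0.
pose g t := odflt s0 [pick s | P s && (f s == t)].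
have gK s : P s -> g (f s) = s.
  move=> Ps; rewrite /g; case: pickP => [s' /andP[Ps' /eqP fs'] | /(_ s)] /=.
    exact: f_inj.
  by rewrite Ps eqxx.
rewrite [RHS](reindex_onto f g); last first.
  move=> t /f_onto[s Ps <-]; by rewrite gK.
apply: eq_big => [s | s Ps]; last by rewrite f_h.
case Ps: (P s); first by rewrite fQ // gK // eqxx.
apply/esym/negP => /andP[/f_onto[s' Ps' fs'] /eqP gs].
by rewrite -gs -fs' gK // Ps' in Ps.
Qed.

End FiberBijection.

Unset Implicit Arguments.
Local Open Scope ring_scope.

Theorem mainTheorem9 (n : nat) (hn : (1 <= n)%N) :
  (exists f : 'S_(n.*2.+1) -> 'S_(n.*2),
      [/\ {in [pred s | inWstar s], forall s, inX (f s)},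
          {in [pred s | inWstar s] &, injective f},
          (forall t, inX t -> exists2 s, inWstar s & f s = t) &
          {in [pred s | inWstar s], forall s, des (f s) = des s}])
  /\ (forall (R : comNzRingType) (t : R),
        \sum_(s : 'S_(n.*2.+1) | inWstar s) t ^+ des s
        = \sum_(s : 'S_(n.*2) | inX s) t ^+ des s).
Proof.
have same_fibers d : #|[pred s : 'S_(n.*2.+1) | inWstar s && (des s == d)]|
                   = #|[pred t : 'S_(n.*2) | inX t && (des t == d)]|.
  rewrite (card_des_fiber (b := true) (s := true)) => [|s]; last exact: inWstarE.
  rewrite (card_des_fiber (b := false) (s := false)) => [|s]; last exact: inXE.
  by apply/seq.permP; case: (stats_equidistributed n).
have [f [fX f_inj f_onto f_des]] := fiber_bijection 1%g same_fibers.
split; first by exists f.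
by move=> R t; apply: big_bijection fX f_inj f_onto f_des.
Qed.
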